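(* Let $\mathcal T_0$ be a theory with signature $\Pi_0$ allowing quantifier elimination, and let $\mathcal T=\mathcal T_0\cup\mathsf{UIF}_\Sigma$ with signature $\Pi=\Pi_0\cup\Sigma$, where $\Sigma=\Sigma_s\cup\Sigma_1$ (disjoint). Let $G$ be a finite set of flat and linear ground $\Pi^C$-clauses, $C_s\subseteq C$ a set of constants occurring in $G$, and $\overline C_s$ the set consisting of $C_s$ together with all constants occurring as arguments of functions of $\Sigma_s$ in $G$. Then the $(\Pi_0\cup\Sigma_s)^{\overline C_s}$-formula $\Gamma$ obtained by applying Algorithm 1 to $\mathcal T$ (with $\mathcal K=\emptyset$), $G$, kept constants $\overline C_s$ and $T:=\mathrm{est}(\mathcal K,G)$ is a $\mathcal T$-general uniform interpolant of $G$ w.r.t. $\Sigma_s\cup\overline C_s$.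
   Context: $\mathsf{UIF}_\Sigma$ denotes the theory of uninterpreted (free) function symbols in $\Sigma$; $\mathcal T_0\cup\mathsf{UIF}_\Sigma$ is the extension of $\mathcal T_0$ by the symbols $\Sigma$ with no axioms. $\mathrm{est}(\mathcal K,G)$ is the set of ground terms starting with an extension symbol occurring in $\mathcal K$ or $G$. Flat/linear ground clauses: a ground clause is flat if all arguments of extension symbols are constants; linear if whenever a constant occurs in two terms with root symbol in $\Sigma$ the terms are identical, and no term starting with a $\Sigma$-symbol contains the same constant twice. Algorithm 1 (function elimination). Input: $\mathcal T_0$ admitting quantifier elimination; an extension $\mathcal T_0\cup\mathcal K$ with extension symbols $\Sigma_s\cup\Sigma_1$, $\mathcal K$ a finite set of flat and linear clauses; a finite set $G$ of flat and linear ground clauses; a set of constants to be kept; a finite set $T$ of flat ground terms with $\mathrm{est}(\mathcal K,G)\subseteq T$ and $\mathcal K[T]$ ground ($\mathcal K[T]$ = instances of $\mathcal K$ whose extension terms are in $T$). Step 1: flatten and purify $\mathcal K[T]\cup G$: bottom-up, replace each term $f(c_1,\dots,c_n)$ ($f$ extension symbol, $c_i$ constants) by a fresh constant $c$ and record $c\approx f(c_1,\dots,c_n)$ in $\mathsf{Def}$, obtaining $\mathcal K_0,G_0$ without extension symbols; let $\mathsf{Con}_0=\{\bigwedge_i c_i\approx d_i\to c\approx d\mid c\approx f(\bar c),d\approx f(\bar d)\in\mathsf{Def}\}$. Step 2: $G_1=\mathcal K_0\cup G_0\cup\mathsf{Con}_0$; keep constants $c_f$ introduced for terms $f(\dots)$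 with $f\in\Sigma_s$, constants occurring as arguments of $\Sigma_s$-symbols in those definitions, and the given kept constants; replace all other constants by existentially quantified variables. Step 3: eliminate these quantifiers modulo $\mathcal T_0$, obtaining quantifier-free $\Gamma_1$. Step 4: output $\Gamma$, obtained by replacing each $c_f$ by the term it names. General uniform interpolant: $\psi$ (quantifier-free, over $\Pi_0\cup\Sigma_s$ and constants $C_s$) is a $\mathcal T$-general uniform interpolant of $\phi$ w.r.t. $\Sigma_s\cup C_s$ if $\phi\models_{\mathcal T}\psi$ and for every ground $\theta$ sharing with $\phi$ only $\Pi_0$-symbols, symbols of $\Sigma_s$ and constants of $C_s$, $\phi\models_{\mathcal T}\theta$ implies $\psi\models_{\mathcal T}\theta$. *)

From mathcomp Require Import all_boot.
From Stdlib Require List.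
Set Implicit Arguments. Unset Strict Implicit. Unset Printing Implicit Defensive.

Section FOL.
(* Pi0 = (F0 function symbols, P0 predicate symbols); Sigma = S (extension
   function symbols).  Free constants C are indexed by nat, variables by nat. *)
Variables (F0 P0 : Type) (S : eqType).
Variables (ar0 : F0 -> nat) (arP : P0 -> nat) (arS : S -> nat).

Inductive term : Type :=
| Var of nat
| Cst of nat
| App0 of F0 & seq term
| AppS of S & seq term.

Inductive form : Type :=
| FTrue | FFalse
| FEq of term & term
| FPred of P0 & seq term
| FNot of form
| FAnd of form & form
| FOr of form & form
| FImp of form & form
| FEx of nat & form
| FAll of nat & form.

Record structure := Structure {
  dom : Type;
  iF0 : F0 -> seq dom -> dom;
  iP0 : P0 -> seq dom -> Prop;
  iS  : S -> seq dom -> dom;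
  iC  : nat -> dom }.

Fixpoint eval (M : structure) (e : nat -> dom M) (t : term) : dom M :=
  match t with
  | Var n => e n
  | Cst c => @iC M c
  | App0 f ts => @iF0 M f (map (@eval M e) ts)
  | AppS f ts => @iS M f (map (@eval M e) ts)
  end.

Definition upd (M : structure) (e : nat -> dom M) (x : nat) (d : dom M) :=
  fun y => if y == x then d else e y.

Fixpoint holds (M : structure) (e : nat -> dom M) (phi : form) : Prop :=
  match phi with
  | FTrue => True
  | FFalse => False
  | FEq t u => @eval M e t = @eval M e u
  | FPred p ts => @iP0 M p (map (@eval M e) ts)
  | FNot a => ~ @holds M e a
  | FAnd a b => @holds M e a /\ @holds M e b
  | FOr a b => @holds M e a \/ @holds M e b
  | FImp a b => @holds M e a -> @holds M e b
  | FEx x a => exists d, @holds M (upd e x d) a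
  | FAll x a => forall d, @holds M (upd e x d) a
  end.

Fixpoint term_wf (t : term) : bool :=
  match t with
  | Var _ | Cst _ => true
  | App0 f ts => (size ts == ar0 f) && all term_wf ts
  | AppS f ts => (size ts == arS f) && all term_wf ts
  end.

Fixpoint form_wf (phi : form) : bool :=
  match phi with
  | FTrue | FFalse => true
  | FEq t u => term_wf t && term_wf u
  | FPred p ts => (size ts == arP p) && all term_wf ts
  | FNot a => form_wf a
  | FAnd a b | FOr a b | FImp a b => form_wf a && form_wf b
  | FEx _ a | FAll _ a => form_wf a
  end.

Fixpoint qf (phi : form) : bool :=
  match phi with
  | FNot a => qf a
  | FAnd a b | FOr a b | FImp a b => qf a && qf b
  | FEx _ _ | FAll _ _ => false
  | _ => true
  end.

Fixpoint symS_t (t : term) : seq S :=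
  match t with
  | Var _ | Cst _ => [::]
  | App0 _ ts => flatten (map symS_t ts)
  | AppS f ts => f :: flatten (map symS_t ts)
  end.

Fixpoint symS_f (phi : form) : seq S :=
  match phi with
  | FTrue | FFalse => [::]
  | FEq t u => symS_t t ++ symS_t u
  | FPred _ ts => flatten (map symS_t ts)
  | FNot a => symS_f a
  | FAnd a b | FOr a b | FImp a b => symS_f a ++ symS_f b
  | FEx _ a | FAll _ a => symS_f a
  end.

Fixpoint consts_t (t : term) : seq nat :=
  match t with
  | Var _ => [::]
  | Cst c => [:: c]
  | App0 _ ts | AppS _ ts => flatten (map consts_t ts)
  end.

Fixpoint consts_f (phi : form) : seq nat :=
  match phi with
  | FTrue | FFalse => [::]
  | FEq t u => consts_t t ++ consts_t u
  | FPred _ ts => flatten (map consts_t ts)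
  | FNot a => consts_f a
  | FAnd a b | FOr a b | FImp a b => consts_f a ++ consts_f b
  | FEx _ a | FAll _ a => consts_f a
  end.

Fixpoint vars_t (t : term) : seq nat :=
  match t with
  | Var n => [:: n]
  | Cst _ => [::]
  | App0 _ ts | AppS _ ts => flatten (map vars_t ts)
  end.

Fixpoint fv_f (phi : form) : seq nat :=
  match phi with
  | FTrue | FFalse => [::]
  | FEq t u => vars_t t ++ vars_t u
  | FPred _ ts => flatten (map vars_t ts)
  | FNot a => fv_f a
  | FAnd a b | FOr a b | FImp a b => fv_f a ++ fv_f b
  | FEx x a | FAll x a => [seq y <- fv_f a | y != x]
  end.

Definition ground (phi : form) : bool := qf phi && (fv_f phi == [::]).

Definition is_atom (phi : form) : bool :=
  match phi with FEq _ _ | FPred _ _ => true | _ => false end.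

Definition literal := (bool * form)%type.
Definition clause := seq literal.

Definition lit_form (l : literal) : form := if l.1 then l.2 else FNot l.2.
Definition clause_form (C : clause) : form :=
  foldr (fun l acc => FOr (lit_form l) acc) FFalse C.
Definition clauses_form (G : seq clause) : form := foldr FAnd FTrue (map clause_form G).

Definition ground_clause (C : clause) : bool :=
  all (fun l => is_atom l.2 && ground l.2 && form_wf l.2) C.

Definition is_cst (t : term) : bool := if t is Cst _ then true else false.

Fixpoint flat_t (t : term) : bool :=
  match t with
  | Var _ | Cst _ => true
  | App0 _ ts => all flat_t ts
  | AppS _ ts => all is_cst ts
  end.

Fixpoint flat_f (phi : form) : bool :=
  match phi with
  | FTrue | FFalse => true
  | FEq t u => flat_t t && flat_t u
  | FPred _ ts => all flat_t ts
  | FNot a => flat_f a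
  | FAnd a b | FOr a b | FImp a b => flat_f a && flat_f b
  | FEx _ a | FAll _ a => flat_f a
  end.

Definition flat_clause (C : clause) : bool := all (fun l => flat_f l.2) C.

Fixpoint ext_t (t : term) : seq term :=
  match t with
  | Var _ | Cst _ => [::]
  | App0 _ ts => flatten (map ext_t ts)
  | AppS f ts => AppS f ts :: flatten (map ext_t ts)
  end.

Fixpoint ext_f (phi : form) : seq term :=
  match phi with
  | FTrue | FFalse => [::]
  | FEq t u => ext_t t ++ ext_t u
  | FPred _ ts => flatten (map ext_t ts)
  | FNot a => ext_f a
  | FAnd a b | FOr a b | FImp a b => ext_f a ++ ext_f b
  | FEx _ a | FAll _ a => ext_f a
  end.

Definition ext_clause (C : clause) : seq term := flatten [seq ext_f l.2 | l <- C].

Definition linear_clause (C : clause) : Prop :=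
  (forall t1 t2 c, List.In t1 (ext_clause C) -> List.In t2 (ext_clause C) ->
     c \in consts_t t1 -> c \in consts_t t2 -> t1 = t2) /\
  (forall t, List.In t (ext_clause C) -> uniq (consts_t t)).

Definition est (G : seq clause) : seq term := flatten (map ext_clause G).

Definition consts_G (G : seq clause) : seq nat := consts_f (clauses_form G).
Definition symS_G (G : seq clause) : seq S := symS_f (clauses_form G).

Variable is_s : S -> bool.  (* membership in Sigma_s; Sigma_1 is the complement *)

Definition is_s_term (t : term) : bool := if t is AppS f _ then is_s f else false.

Section Alg.
Variable name : term -> nat.   (* the fresh constant naming each extension term *)

Fixpoint purify_t (t : term) : term :=
  match t with
  | Var n => Var n
  | Cst c => Cst c
  | App0 f ts => App0 f (map purify_t ts)
  | AppS f ts => Cst (name (AppS f ts))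
  end.

Fixpoint purify_f (phi : form) : form :=
  match phi with
  | FTrue => FTrue | FFalse => FFalse
  | FEq t u => FEq (purify_t t) (purify_t u)
  | FPred p ts => FPred p (map purify_t ts)
  | FNot a => FNot (purify_f a)
  | FAnd a b => FAnd (purify_f a) (purify_f b)
  | FOr a b => FOr (purify_f a) (purify_f b)
  | FImp a b => FImp (purify_f a) (purify_f b)
  | FEx x a => FEx x (purify_f a)
  | FAll x a => FAll x (purify_f a)
  end.

Definition con_pair (t1 t2 : term) : form :=
  match t1, t2 with
  | AppS f a, AppS g b =>
      if (f == g) && (size a == size b) then
        FImp (foldr FAnd FTrue [seq FEq p.1 p.2 | p <- zip a b])
             (FEq (Cst (name t1)) (Cst (name t2)))
      else FTrue
  | _, _ => FTrue
  end.

Definition Con0 (ts : seq term) : form :=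
  foldr FAnd FTrue [seq con_pair p.1 p.2 | p <- [seq (t1, t2) | t1 <- ts, t2 <- ts]].

Definition G1 (G : seq clause) : form :=
  FAnd (purify_f (clauses_form G)) (Con0 (est G)).

Definition estS (G : seq clause) : seq term := [seq t <- est G | is_s_term t].
Definition argsS (G : seq clause) : seq nat := flatten (map consts_t (estS G)).
Definition Cbar (Cs : seq nat) (G : seq clause) : seq nat := Cs ++ argsS G.

Definition kept (Cs : seq nat) (G : seq clause) : seq nat :=
  Cbar Cs G ++ map name (estS G).

Fixpoint abstr_t (xs : seq nat) (t : term) : term :=
  match t with
  | Var n => Var n
  | Cst c => if c \in xs then Var c else Cst c
  | App0 f ts => App0 f (map (abstr_t xs) ts)
  | AppS f ts => AppS f (map (abstr_t xs) ts)
  end.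

Fixpoint abstr_f (xs : seq nat) (phi : form) : form :=
  match phi with
  | FTrue => FTrue | FFalse => FFalse
  | FEq t u => FEq (abstr_t xs t) (abstr_t xs u)
  | FPred p ts => FPred p (map (abstr_t xs) ts)
  | FNot a => FNot (abstr_f xs a)
  | FAnd a b => FAnd (abstr_f xs a) (abstr_f xs b)
  | FOr a b => FOr (abstr_f xs a) (abstr_f xs b)
  | FImp a b => FImp (abstr_f xs a) (abstr_f xs b)
  | FEx x a => FEx x (abstr_f xs a)
  | FAll x a => FAll x (abstr_f xs a)
  end.

Definition exclose (keep : seq nat) (phi : form) : form :=
  let xs := undup [seq c <- consts_f phi | c \notin keep] in
  foldr FEx (abstr_f xs phi) xs.

Definition step2 (Cs : seq nat) (G : seq clause) : form := exclose (kept Cs G) (G1 G).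

Fixpoint unname_t (ts : seq term) (t : term) : term :=
  match t with
  | Var n => Var n
  | Cst c => let i := find (fun u => name u == c) ts in
             if i < size ts then nth t ts i else Cst c
  | App0 f us => App0 f (map (unname_t ts) us)
  | AppS f us => AppS f (map (unname_t ts) us)
  end.

Fixpoint unname_f (ts : seq term) (phi : form) : form :=
  match phi with
  | FTrue => FTrue | FFalse => FFalse
  | FEq t u => FEq (unname_t ts t) (unname_t ts u)
  | FPred p us => FPred p (map (unname_t ts) us)
  | FNot a => FNot (unname_f ts a)
  | FAnd a b => FAnd (unname_f ts a) (unname_f ts b)
  | FOr a b => FOr (unname_f ts a) (unname_f ts b)
  | FImp a b => FImp (unname_f ts a) (unname_f ts b)
  | FEx x a => FEx x (unname_f ts a)
  | FAll x a => FAll x (unname_f ts a)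
  end.

Definition step4 (G : seq clause) (Gamma1 : form) : form := unname_f (estS G) Gamma1.

End Alg.

Definition model (T0 : form -> Prop) (M : structure) : Prop :=
  forall phi, T0 phi -> forall e : nat -> dom M, holds e phi.

Definition Pi0_theory (T0 : form -> Prop) : Prop :=
  forall phi, T0 phi ->
    [/\ form_wf phi, symS_f phi = [::], consts_f phi = [::] & fv_f phi = [::]].

Definition allows_QE (T0 : form -> Prop) : Prop :=
  forall phi, form_wf phi -> symS_f phi = [::] -> consts_f phi = [::] ->
  exists psi, [/\ qf psi && form_wf psi, symS_f psi = [::], consts_f psi = [::],
    {subset fv_f psi <= fv_f phi} &
    forall M, model T0 M -> forall e : nat -> dom M, holds e phi <-> holds e psi].

(* entailment modulo T = T0 u UIF_Sigma: models of T0 with arbitrary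
   interpretation of the Sigma symbols and of the constants *)
Definition entailsT (T0 : form -> Prop) (phi psi : form) : Prop :=
  forall M, model T0 M -> forall e : nat -> dom M, holds e phi -> holds e psi.

Definition gen_unif_interp (T0 : form -> Prop) (Cs : seq nat) (phi psi : form) : Prop :=
  [/\ ground psi && form_wf psi, all is_s (symS_f psi), {subset consts_f psi <= Cs},
      entailsT T0 phi psi &
      forall theta, ground theta -> form_wf theta ->
        (forall f, f \in symS_f theta -> f \in symS_f phi -> is_s f) ->
        (forall c, c \in consts_f theta -> c \in consts_f phi -> c \in Cs) ->
        entailsT T0 phi theta -> entailsT T0 psi theta].

End FOL.

From mathcomp Require Import all_boot.
From Stdlib Require List FunctionalExtensionality ClassicalEpsilon.
Set Implicit Arguments. Unset Strict Implicit. Unset Printing Implicit Defensive.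

(* Quantifier elimination preserves equivalence and Step 4 only renames the kept
   constants, so Gamma holds in a model M exactly when some values g of the eliminated
   constants make the purified clauses and the instances Con_0 true, where the name of
   each Sigma_s-term denotes that term and the constants of Cbar_s keep their value.
   A model of G yields such g (every name denotes its term), hence G entails Gamma.
   Conversely, Con_0 says that the values g assigns to the names of the Sigma_1-terms of
   G depend only on the values of their arguments, which are constants by flatness; so
   redefining each Sigma_1-symbol on these argument tuples, and the constants of G
   outside Cbar_s according to g, expands M to a model of G.  This model differs from M
   only on symbols and constants that a formula theta sharing with G only Sigma_s and
   Cbar_s cannot mention, so G |= theta gives M |= theta. *)

(* Terms have no decidable equality (their symbols range over arbitrary types), so
   membership of terms is the propositional [List.In]. *)
Section ListIn.
Variables (A B : Type) (C : eqType).

Lemma all_InP (p : pred A) (s : seq A) :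
  reflect (forall x, List.In x s -> p x) (all p s).
Proof.
elim: s => /= [|x s IH]; first by left.
apply: (iffP andP) => [[px /IH ps] y [<-|]|ps]; auto.
by split; [apply: ps; left | apply/IH => y sy; apply: ps; right].
Qed.

Lemma In_flatten_map (k : A -> seq B) (s : seq A) y :
  List.In y (flatten (map k s)) <-> exists2 x, List.In x s & List.In y (k x).
Proof.
elim: s => /= [|x s IH]; first by split=> // -[].
rewrite List.in_app_iff IH; split.
- by move=> [ky|[z sz kz]]; [exists x | exists z]; auto.
- by move=> [z [<-|sz] kz]; [left | right; exists z].
Qed.

Lemma flatten_mapP_In (k : A -> seq C) (s : seq A) c :
  reflect (exists2 x, List.In x s & c \in k x) (c \in flatten (map k s)).
Proof.
elim: s => /= [|x s IH]; first by right=> -[].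
rewrite mem_cat; apply: (iffP orP) => [[kc|/IH [z sz kz]]|[z [<-|sz] kz]].
- by exists x; [left|].
- by exists z; [right|].
- by left.
- by right; apply/IH; exists z.
Qed.

Lemma mapP_In (f : A -> C) (s : seq A) c :
  reflect (exists2 x, List.In x s & c = f x) (c \in map f s).
Proof.
elim: s => /= [|x s IH]; first by right=> -[].
rewrite inE; apply: (iffP orP) => [[/eqP ->|/IH [z sz ->]]|[z [<-|sz] cE]].
- by exists x; [left|].
- by exists z; [right|].
- by left; rewrite cE.
- by right; apply/IH; exists z.
Qed.

Lemma In_nth (x0 : A) (s : seq A) i : i < size s -> List.In (nth x0 s i) s.
Proof. by elim: s i => //= x s IH [|i] lti; [left | right; apply: IH]. Qed.

Lemma hasP_In (p : pred A) (s : seq A) : reflect (exists2 x, List.In x s & p x) (has p s).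
Proof.
elim: s => /= [|x s IH]; first by right=> -[].
apply: (iffP orP) => [[px|/IH [y sy py]]|[y [<-|sy] py]].
- by exists x; [left|].
- by exists y; [right|].
- by left.
- by right; apply/IH; exists y.
Qed.

Lemma nil_of_notin (s : seq C) : (forall x, x \notin s) -> s = [::].
Proof. by case: s => // x s /(_ x); rewrite mem_head. Qed.

Lemma In_zip (a b : seq A) p : List.In p (zip a b) -> List.In p.1 a /\ List.In p.2 b.
Proof.
elim: a b => [|x a IH] [|y b] //= [<-|/IH [pa pb]]; by [split; left | split; right].
Qed.

End ListIn.

Lemma In_allpairs (A : Type) (s : seq A) x y :
  List.In (x, y) [seq (x1, x2) | x1 <- s, x2 <- s] <-> List.In x s /\ List.In y s.
Proof.
rewrite In_flatten_map; split=> [[x1 x1s]|[xs ys]].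
- by rewrite List.in_map_iff => -[x2 [[<- <-] x2s]].
- by exists x => //; rewrite List.in_map_iff; exists y.
Qed.


Section Syntax.
Variables (F0 P0 : Type) (S : eqType) (ar0 : F0 -> nat) (arP : P0 -> nat) (arS : S -> nat).
Notation term := (term F0 S).
Notation form := (form F0 P0 S).
Notation consts_t := (@consts_t F0 S).
Notation vars_t := (@vars_t F0 S).
Notation symS_t := (@symS_t F0 S).
Notation ext_t := (@ext_t F0 S).
Notation flat_t := (@flat_t F0 S).

Section TermInd.
Variable P : term -> Prop.
Hypotheses (PVar : forall n, P (Var _ _ n)) (PCst : forall c, P (Cst _ _ c))
  (PApp0 : forall f ts, (forall t, List.In t ts -> P t) -> P (App0 f ts))
  (PAppS : forall f ts, (forall t, List.In t ts -> P t) -> P (AppS f ts)).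

Fixpoint term_ind_In (t : term) : P t :=
  let fix args_ind (ts : seq term) : forall u, List.In u ts -> P u :=
    match ts with
    | [::] => fun u (u_ts : List.In u [::]) => match u_ts with end
    | v :: vs => fun u u_ts => match u_ts with
                 | or_introl vu => eq_ind v P (term_ind_In v) u vu
                 | or_intror u_vs => args_ind vs u u_vs end end in
  match t with
  | Var n => PVar n
  | Cst c => PCst c
  | App0 f ts => PApp0 f (args_ind ts)
  | AppS f ts => PAppS f (args_ind ts)
  end.
End TermInd.

Fixpoint form_terms (phi : form) : seq term :=
  match phi with
  | FTrue | FFalse => [::]
  | FEq t u => [:: t; u]
  | FPred _ ts => ts
  | FNot a | FEx _ a | FAll _ a => form_terms a
  | FAnd a b | FOr a b | FImp a b => form_terms a ++ form_terms b
  end.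

Fixpoint map_form (tau : term -> term) (phi : form) : form :=
  match phi with
  | FTrue => FTrue _ _ _
  | FFalse => FFalse _ _ _
  | FEq t u => FEq P0 (tau t) (tau u)
  | FPred p ts => FPred p (map tau ts)
  | FNot a => FNot (map_form tau a)
  | FAnd a b => FAnd (map_form tau a) (map_form tau b)
  | FOr a b => FOr (map_form tau a) (map_form tau b)
  | FImp a b => FImp (map_form tau a) (map_form tau b)
  | FEx x a => FEx x (map_form tau a)
  | FAll x a => FAll x (map_form tau a)
  end.

Lemma consts_f_terms phi : consts_f phi = flatten (map consts_t (form_terms phi)).
Proof. by elim: phi => //= *; rewrite ?cats0 ?map_cat ?flatten_cat; congruence. Qed.

Lemma symS_f_terms phi : symS_f phi = flatten (map symS_t (form_terms phi)).
Proof. by elim: phi => //= *; rewrite ?cats0 ?map_cat ?flatten_cat; congruence. Qed.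

Lemma ext_f_terms phi : ext_f phi = flatten (map ext_t (form_terms phi)).
Proof. by elim: phi => //= *; rewrite ?cats0 ?map_cat ?flatten_cat; congruence. Qed.

Lemma fv_f_terms phi : qf phi -> fv_f phi = flatten (map vars_t (form_terms phi)).
Proof.
elim: phi => [||t u|p ts|a IH|a IHa b IHb|a IHa b IHb|a IHa b IHb|x a IH|x a IH] //=.
- by rewrite cats0.
all: by case/andP=> qa qb; rewrite IHa // IHb // map_cat flatten_cat.
Qed.

Lemma flat_f_terms phi : flat_f phi = all flat_t (form_terms phi).
Proof. by elim: phi => //= *; rewrite ?andbT ?all_cat; congruence. Qed.

Lemma form_wf_terms phi : form_wf ar0 arP arS phi -> all (term_wf ar0 arS) (form_terms phi).
Proof.
elim: phi => [||t u|p ts|a IH|a IHa b IHb|a IHa b IHb|a IHa b IHb|x a IH|x a IH] //=.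
- by rewrite andbT.
- by case/andP.
all: by rewrite all_cat => /andP[/IHa-> /IHb->].
Qed.

Lemma form_terms_map tau phi : form_terms (map_form tau phi) = map tau (form_terms phi).
Proof. by elim: phi => //= *; rewrite ?map_cat; congruence. Qed.

Lemma map_form_ext tau1 tau2 phi : tau1 =1 tau2 -> map_form tau1 phi = map_form tau2 phi.
Proof. by move=> tau12; elim: phi => //= *; rewrite ?tau12 ?(eq_map tau12); congruence. Qed.

Lemma map_form_id phi : map_form id phi = phi.
Proof. by elim: phi => //= *; rewrite ?map_id; congruence. Qed.

Lemma qf_map_form tau phi : qf (map_form tau phi) = qf phi.
Proof. by elim: phi => //= *; congruence. Qed.

Lemma form_wf_map_form tau phi : form_wf ar0 arP arS phi ->
  (forall t, List.In t (form_terms phi) -> term_wf ar0 arS (tau t)) ->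
  form_wf ar0 arP arS (map_form tau phi).
Proof.
elim: phi => [||t u|p ts|a IH|a IHa b IHb|a IHa b IHb|a IHa b IHb|x a IH|x a IH] //=.
- by move=> _ wf_tau; rewrite !wf_tau //; auto.
- by case/andP=> sz _ wf_tau; rewrite size_map sz all_map; apply/all_InP.
all: move=> /andP[wa wb] wf_tau.
all: by rewrite IHa ?IHb // => t tin; apply: wf_tau; rewrite List.in_app_iff; auto.
Qed.

Lemma purify_map_form name phi : purify_f name phi = map_form (purify_t name) phi.
Proof. by elim: phi => //= *; congruence. Qed.

Fixpoint csubst (sigma : nat -> term) (t : term) : term :=
  match t with
  | Var n => Var _ _ n
  | Cst c => sigma c
  | App0 f ts => App0 f (map (csubst sigma) ts)
  | AppS f ts => AppS f (map (csubst sigma) ts)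
  end.

Lemma unname_csubst name ts t :
  unname_t name ts t = csubst (fun c => unname_t name ts (Cst _ _ c)) t.
Proof.
by elim/term_ind_In: t => //= f us IH; congr (_ f _); apply: List.map_ext_in.
Qed.

Lemma abstr_csubst xs t :
  abstr_t xs t = csubst (fun c => if c \in xs then Var _ _ c else Cst _ _ c) t.
Proof.
by elim/term_ind_In: t => //= f us IH; congr (_ f _); apply: List.map_ext_in.
Qed.

Lemma unname_f_csubst name ts phi :
  unname_f name ts phi = map_form (csubst (fun c => unname_t name ts (Cst _ _ c))) phi.
Proof.
rewrite -(map_form_ext _ (unname_csubst name ts)).
by elim: phi => //= *; congruence.
Qed.

Lemma abstr_f_csubst xs phi :
  abstr_f xs phi = map_form (csubst (fun c => if c \in xs then Var _ _ c else Cst _ _ c)) phi.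
Proof.
rewrite -(map_form_ext _ (abstr_csubst xs)).
by elim: phi => //= *; congruence.
Qed.

Lemma mem_consts_csubst sigma t c : c \in consts_t (csubst sigma t) ->
  exists2 d, d \in consts_t t & c \in consts_t (sigma d).
Proof.
elim/term_ind_In: t => //= [d|f us IH|f us IH]; first by exists d; rewrite ?inE.
all: rewrite -map_comp => /flatten_mapP_In [u uin /IH [//|d du cd]].
all: by exists d => //; apply/flatten_mapP_In; exists u.
Qed.

Lemma mem_vars_csubst sigma t x : x \in vars_t (csubst sigma t) ->
  x \in vars_t t \/ exists2 d, d \in consts_t t & x \in vars_t (sigma d).
Proof.
elim/term_ind_In: t => //= [n|d|f us IH|f us IH]; [by left | by right; exists d; rewrite ?inE|..].
all: rewrite -map_comp => /flatten_mapP_In [u uin /IH [//|xu|[d du xd]]].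
- by left; apply/flatten_mapP_In; exists u.
- by right; exists d => //; apply/flatten_mapP_In; exists u.
- by left; apply/flatten_mapP_In; exists u.
- by right; exists d => //; apply/flatten_mapP_In; exists u.
Qed.

Lemma mem_symS_csubst sigma t f : f \in symS_t (csubst sigma t) ->
  f \in symS_t t \/ exists2 d, d \in consts_t t & f \in symS_t (sigma d).
Proof.
elim/term_ind_In: t => //= [d|g us IH|g us IH]; first by right; exists d; rewrite ?inE.
- rewrite -map_comp => /flatten_mapP_In [u uin /IH [//|fu|[d du fd]]].
  + by left; apply/flatten_mapP_In; exists u.
  + by right; exists d => //; apply/flatten_mapP_In; exists u.
- rewrite inE -map_comp => /orP[fg|/flatten_mapP_In [u uin /IH [//|fu|[d du fd]]]].
  + by left; rewrite inE fg.
  + by left; rewrite inE; apply/orP; right; apply/flatten_mapP_In; exists u.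
  + by right; exists d => //; apply/flatten_mapP_In; exists u.
Qed.

Lemma term_wf_csubst sigma t : (forall d, term_wf ar0 arS (sigma d)) ->
  term_wf ar0 arS t -> term_wf ar0 arS (csubst sigma t).
Proof.
move=> wf_sigma; elim/term_ind_In: t => //= f us IH /andP[sz /all_InP wf_us].
all: rewrite size_map sz all_map; apply/all_InP => u uin; exact: IH (wf_us u uin).
Qed.

Lemma ext_t_ind (R : term -> term -> Prop) :
  (forall t, R t t) ->
  (forall u t f ts, List.In t ts -> R u t -> R u (App0 f ts)) ->
  (forall u t f ts, List.In t ts -> R u t -> R u (AppS f ts)) ->
  forall t u, List.In u (ext_t t) -> R u t.
Proof.
move=> Rrefl R0 RS; elim/term_ind_In => //= [f ts IH|f ts IH] u.
- by rewrite In_flatten_map => -[t tin ut]; apply: (R0 u t) => //; apply: IH.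
- move=> [<-|]; first exact: Rrefl.
  by rewrite In_flatten_map => -[t tin ut]; apply: (RS u t) => //; apply: IH.
Qed.

Lemma ext_t_sub (T : eqType) (k : term -> seq T) (t u : term) :
  (forall f ts, k (App0 f ts) = flatten (map k ts)) ->
  (forall f ts, {subset flatten (map k ts) <= k (AppS f ts)}) ->
  List.In u (ext_t t) -> {subset k u <= k t}.
Proof.
move=> k0 kS; move: t u.
apply: (ext_t_ind (R := fun u t => {subset k u <= k t})); first by move=> t c.
all: move=> v w f ts wts kvw c /kvw cw.
- by rewrite k0; apply/flatten_mapP_In; exists w.
- by apply: kS; apply/flatten_mapP_In; exists w.
Qed.

Lemma ext_t_wf t u : List.In u (ext_t t) -> term_wf ar0 arS t -> term_wf ar0 arS u.
Proof.
move: t u; apply: (ext_t_ind (R := fun u t => term_wf ar0 arS t -> term_wf ar0 arS u)) => //.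
all: by move=> u t f ts tin IH /andP[_ /all_InP wf_ts]; apply/IH/wf_ts.
Qed.

Lemma ext_t_flat t u : flat_t t -> List.In u (ext_t t) ->
  exists f ts, u = AppS f ts /\ all (@is_cst F0 S) ts.
Proof.
elim/term_ind_In: t u => //= [f ts IH|f ts IH] u.
- move/all_InP=> flat_ts; rewrite In_flatten_map => -[t tin ut].
  by apply: (IH t) => //; apply: flat_ts.
- move=> cst_ts [<-|]; first by exists f, ts.
  rewrite In_flatten_map => -[t tin]; move/all_InP: cst_ts => /(_ t tin).
  by case: t tin.
Qed.

Section Unname.
Variables (name : term -> nat) (ts : seq term).

Lemma unname_cst_cases c : unname_t name ts (Cst _ _ c) = Cst _ _ c \/
  exists2 u, List.In u ts & unname_t name ts (Cst _ _ c) = u.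
Proof.
rewrite /=; case: ifP => [hit|_]; [right | by left].
by exists (nth (Cst _ _ c) ts (find (fun u => name u == c) ts)); first apply: In_nth.
Qed.

Lemma unname_fresh c : (forall u, List.In u ts -> name u <> c) ->
  unname_t name ts (Cst _ _ c) = Cst _ _ c.
Proof.
move=> fresh /=; case: ifP => // lt_find; exfalso.
have hit : has (fun u => name u == c) ts by rewrite has_find.
apply: (fresh (nth (Cst F0 S c) ts (find (fun u => name u == c) ts))); first exact: In_nth.
exact/eqP/(nth_find _ hit).
Qed.

Lemma unname_name u :
  (forall u1 u2, List.In u1 ts -> List.In u2 ts -> name u1 = name u2 -> u1 = u2) ->
  List.In u ts -> unname_t name ts (Cst _ _ (name u)) = u.
Proof.
move=> name_inj uts /=.
have hit : has (fun v => name v == name u) ts.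
  by apply/hasP_In; exists u.
rewrite -has_find hit; apply: name_inj => //; first by apply: In_nth; rewrite -has_find.
exact/eqP/(nth_find (Cst F0 S (name u)) hit).
Qed.
End Unname.

Lemma mem_consts_map_form tau phi c : c \in consts_f (map_form tau phi) ->
  exists2 t, List.In t (form_terms phi) & c \in consts_t (tau t).
Proof. by rewrite consts_f_terms form_terms_map -map_comp => /flatten_mapP_In. Qed.

Lemma mem_symS_map_form tau phi f : f \in symS_f (map_form tau phi) ->
  exists2 t, List.In t (form_terms phi) & f \in symS_t (tau t).
Proof. by rewrite symS_f_terms form_terms_map -map_comp => /flatten_mapP_In. Qed.

Lemma mem_fv_map_form tau phi x : qf phi -> x \in fv_f (map_form tau phi) ->
  exists2 t, List.In t (form_terms phi) & x \in vars_t (tau t).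
Proof.
by move=> qphi; rewrite fv_f_terms ?qf_map_form // form_terms_map -map_comp => /flatten_mapP_In.
Qed.

Lemma consts_exclose keep (phi : form) : {subset consts_f (exclose keep phi) <= keep}.
Proof.
have consts_exF (psi : form) l : consts_f (foldr (@FEx F0 P0 S) psi l) = consts_f psi by elim: l.
rewrite /exclose consts_exF abstr_f_csubst => c.
case/mem_consts_map_form => t tin /mem_consts_csubst [d dt].
have dphi : d \in consts_f phi by rewrite consts_f_terms; apply/flatten_mapP_In; exists t.
case: ifPn => [//|]; rewrite mem_undup mem_filter dphi andbT negbK inE => dkeep /eqP -> //.
Qed.

Section Purification.
Variable name : term -> nat.

Lemma vars_purify t : {subset vars_t (purify_t name t) <= vars_t t}.
Proof.
elim/term_ind_In: t => [n|c|f ts IH|f ts IH] x //=.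
rewrite -map_comp => /flatten_mapP_In [t tin xt].
by apply/flatten_mapP_In; exists t => //; apply: IH.
Qed.

Lemma qf_Con0 ts : qf (Con0 P0 name ts).
Proof.
rewrite /Con0; elim: [seq (t1, t2) | t1 <- ts, t2 <- ts] => //= -[t1 t2] l ->; rewrite andbT.
case: t1 => [n|c|f a|f a]; case: t2 => [n'|c'|g b|g b] //=.
by case: ifP => //= _; rewrite andbT; elim: (zip a b).
Qed.

Lemma mem_fv_Con0 ts x : x \in fv_f (Con0 P0 name ts) ->
  exists f a, List.In (AppS f a) ts /\ x \in vars_t (AppS f a).
Proof.
rewrite /Con0; set pairs := [seq (t1, t2) | t1 <- ts, t2 <- ts].
have : forall p, List.In p pairs -> List.In p.1 ts /\ List.In p.2 ts.
  by move=> [t1 t2]; rewrite In_allpairs.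
elim: pairs => //= -[t1 t2] pairs IH pairs_ts; rewrite mem_cat => /orP[|]; last first.
  by apply: IH => p pin; apply: pairs_ts; right.
have [/= t1ts t2ts] := pairs_ts _ (or_introl erefl); clear IH pairs_ts.
case: t1 t1ts => // f a fa; case: t2 t2ts => // g b gb /=; case: ifP => //= _.
rewrite cats0; elim: (zip a b) (@In_zip _ a b) => //= -[u v] l IHl uv_ab.
rewrite mem_cat => /orP[|/IHl]; last by apply=> p pin; apply: uv_ab; right.
have [/= ua vb] := uv_ab _ (or_introl erefl); rewrite mem_cat => /orP[xu|xv].
- by exists f, a; split=> //=; apply/flatten_mapP_In; exists u.
- by exists g, b; split=> //=; apply/flatten_mapP_In; exists v.
Qed.

End Purification.

End Syntax.

Section Semantics.
Variables (F0 P0 : Type) (S : eqType).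
Notation term := (term F0 S).
Notation form := (form F0 P0 S).
Notation structure := (structure F0 P0 S).
Notation consts_t := (@consts_t F0 S).
Notation vars_t := (@vars_t F0 S).
Notation symS_t := (@symS_t F0 S).
Notation ext_t := (@ext_t F0 S).
Notation eval M := (@eval F0 P0 S M).
Notation holds M := (@holds F0 P0 S M).
Notation iS M := (@iS F0 P0 S M).

Definition reinterp (M : structure) (h : S -> seq (dom M) -> dom M) (g : nat -> dom M) :
  structure := @Structure F0 P0 S (dom M) (@iF0 _ _ _ M) (@iP0 _ _ _ M) h g.
Arguments reinterp : clear implicits.

Lemma eval_reinterp M h g e t : {in consts_t t, g =1 iC M} -> {in symS_t t, h =1 iS M} ->
  eval (reinterp M h g) e t = eval M e t.
Proof.
elim/term_ind_In: t => //= [c|f ts IH|f ts IH] gM hM; first by apply: gM; rewrite inE.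
- congr (_ f _); apply: List.map_ext_in => t tin.
  apply: (IH t tin) => [c ct|f' f't].
  + by apply: gM; apply/flatten_mapP_In; exists t.
  + by apply: hM; apply/flatten_mapP_In; exists t.
- rewrite hM ?inE ?eqxx //; congr (_ f _); apply: List.map_ext_in => t tin.
  apply: (IH t tin) => [c ct|f' f't].
  + by apply: gM; apply/flatten_mapP_In; exists t.
  + by apply: hM; rewrite inE; apply/orP; right; apply/flatten_mapP_In; exists t.
Qed.

Lemma holds_reinterp M h g phi : {in consts_f phi, g =1 iC M} -> {in symS_f phi, h =1 iS M} ->
  forall e, holds (reinterp M h g) e phi <-> holds M e phi.
Proof.
have catl (s1 s2 : seq nat) : {subset s1 <= s1 ++ s2} by move=> x; rewrite mem_cat => ->.
have catr (s1 s2 : seq nat) : {subset s2 <= s1 ++ s2} by move=> x; rewrite mem_cat orbC => ->.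
have catlS (s1 s2 : seq S) : {subset s1 <= s1 ++ s2} by move=> x; rewrite mem_cat => ->.
have catrS (s1 s2 : seq S) : {subset s2 <= s1 ++ s2} by move=> x; rewrite mem_cat orbC => ->.
elim: phi => [||t u|p ts|a IH|a IHa b IHb|a IHa b IHb|a IHa b IHb|x a IH|x a IH] //= gM hM e.
- by rewrite !eval_reinterp // => y yin; [apply: gM | apply: hM | apply: gM | apply: hM];
    rewrite mem_cat yin ?orbT.
- suff -> : map (eval (reinterp M h g) e) ts = map (eval M e) ts by [].
  apply: List.map_ext_in => t tin.
  by apply: eval_reinterp => y yin; [apply: gM | apply: hM]; apply/flatten_mapP_In; exists t.
- by rewrite IH.
all: try by rewrite (IHa (sub_in1 (catl _ _) gM) (sub_in1 (catlS _ _) hM))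
                    (IHb (sub_in1 (catr _ _) gM) (sub_in1 (catrS _ _) hM)).
- by split=> -[d hd]; exists d; [rewrite -(IH gM hM) | rewrite (IH gM hM)].
- by split=> hd d; [rewrite -(IH gM hM) | rewrite (IH gM hM)]; apply: hd.
Qed.

Lemma map_form_holds M h g e1 e2 tau1 tau2 phi : qf phi ->
  (forall t, List.In t (form_terms phi) ->
     eval M e1 (tau1 t) = eval (reinterp M h g) e2 (tau2 t)) ->
  holds M e1 (map_form tau1 phi) <-> holds (reinterp M h g) e2 (map_form tau2 phi).
Proof.
elim: phi => [||t u|p ts|a IH|a IHa b IHb|a IHa b IHb|a IHa b IHb|x a IH|x a IH] //= qphi tau12.
- by rewrite !tau12; auto.
- rewrite -!map_comp.
  suff -> : map (eval M e1 \o tau1) ts = map (eval (reinterp M h g) e2 \o tau2) ts by [].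
  exact: List.map_ext_in.
- by rewrite IH.
all: move/andP: qphi => [qa qb].
all: by rewrite IHa ?IHb // => t tin; apply: tau12; rewrite List.in_app_iff; auto.
Qed.

Lemma eval_csubst M e sigma t :
  eval M e (csubst sigma t) = eval (reinterp M (iS M) (fun c => eval M e (sigma c))) e t.
Proof.
by elim/term_ind_In: t => //= f us IH; congr (_ f _); rewrite -map_comp; apply: List.map_ext_in.
Qed.

Lemma holds_csubst M e sigma phi : qf phi ->
  holds M e (map_form (csubst sigma) phi) <->
  holds (reinterp M (iS M) (fun c => eval M e (sigma c))) e phi.
Proof.
move=> qphi; rewrite -[X in _ <-> holds _ _ X]map_form_id.
by apply: map_form_holds => // t _; apply: eval_csubst.
Qed.

Lemma eval_env M e1 e2 t : {in vars_t t, e1 =1 e2} -> eval M e1 t = eval M e2 t.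
Proof.
elim/term_ind_In: t => //= [n|f us IH|f us IH] e12; first by apply: e12; rewrite inE.
all: congr (_ f _); apply: List.map_ext_in => t tin; apply: IH => // x xt.
all: by apply: e12; apply/flatten_mapP_In; exists t.
Qed.

Lemma holds_ground_env M e1 e2 phi : qf phi -> fv_f phi = [::] ->
  holds M e1 phi <-> holds M e2 phi.
Proof.
move=> qphi fv0; transitivity (holds (reinterp M (iS M) (iC M)) e2 phi); last first.
  exact: holds_reinterp.
rewrite -(map_form_id phi).
apply: map_form_holds => // t tin; rewrite eval_reinterp //; apply: eval_env => x xt.
have : x \in fv_f phi by rewrite fv_f_terms //; apply/flatten_mapP_In; exists t.
by rewrite fv0.
Qed.

Lemma holds_exF M e phi xs :
  holds M e (foldr (@FEx F0 P0 S) phi xs) <->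
  exists e' : nat -> dom M, (forall y, y \notin xs -> e' y = e y) /\ holds M e' phi.
Proof.
elim: xs e => [|x xs IH] e /=.
  split=> [ephi|[e' [e'e e'phi]]]; first by exists e.
  by rewrite -(FunctionalExtensionality.functional_extensionality e' e (fun y => e'e y isT)).
split=> [[d /IH [e' [e'e e'phi]]]|[e' [e'e e'phi]]].
- exists e'; split=> // y; rewrite inE negb_or => /andP[yx yxs].
  by rewrite e'e // /upd (negbTE yx).
- exists (e' x); apply/IH; exists e'; split=> // y yxs; rewrite /upd.
  by case: eqP => [->|/eqP yx] //; apply: e'e; rewrite inE negb_or yx.
Qed.

Lemma holds_exclose M e keep phi : qf phi -> fv_f phi = [::] ->
  holds M e (exclose keep phi) <->
  exists g, {in keep, g =1 iC M} /\ holds (reinterp M (iS M) g) e phi.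
Proof.
move=> qphi fv0; rewrite /exclose; set xs := undup _.
have xsE c : (c \in xs) = (c \in consts_f phi) && (c \notin keep).
  by rewrite mem_undup mem_filter andbC.
have evalE e' (g : nat -> dom M) : {in xs, e' =1 g} ->
    (fun c => eval M e' (if c \in xs then Var F0 S c else Cst F0 S c)) =
    (fun c => if c \in xs then g c else iC M c).
  move=> e'g; apply: FunctionalExtensionality.functional_extensionality => c.
  by case: ifP => //= /e'g.
rewrite holds_exF abstr_f_csubst.
split=> [[e' [_ e'phi]]|[g [gkeep gphi]]].
- exists (fun c => if c \in xs then e' c else iC M c); split.
    by move=> c ckeep; rewrite xsE ckeep andbF.
  move/(holds_csubst _ _ qphi): e'phi; rewrite (evalE e' e') //.
  exact: (iffLR (holds_ground_env _ _ qphi fv0)).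
- exists (fun y => if y \in xs then g y else e y); split; first by move=> y /negbTE ->.
  apply/(holds_csubst (M := M) _ _ qphi); rewrite (evalE _ g) => [|c /= ->] //.
  apply: (iffLR (holds_ground_env (M := reinterp M (iS M) _) e _ qphi fv0)).
  have gxs : {in consts_f phi, (fun c => if c \in xs then g c else iC M c) =1 g}.
    by move=> c cphi /=; case: ifPn => //; rewrite xsE cphi negbK => /gkeep ->.
  exact/(holds_reinterp (M := reinterp M (iS M) g) gxs (fun _ _ => erefl)).
Qed.

Lemma holds_foldr_and M e (l : seq form) :
  holds M e (foldr (@FAnd F0 P0 S) (FTrue _ _ _) l) <-> forall phi, List.In phi l -> holds M e phi.
Proof.
elim: l => /= [|a l ->]; first by split.
by split=> [[ha hl] phi [<-|]|hl]; auto.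
Qed.

Lemma holds_zip_eq M e (a b : seq term) : size a = size b ->
  holds M e (foldr (@FAnd F0 P0 S) (FTrue _ _ _) [seq FEq P0 p.1 p.2 | p <- zip a b]) <->
  map (eval M e) a = map (eval M e) b.
Proof.
elim: a b => [|x a IH] [|y b] //= [sz]; rewrite IH //.
by split=> [[-> ->]|[-> ->]].
Qed.

Section PurificationSemantics.
Variable name : term -> nat.

Lemma holds_Con0 M e ts : holds M e (Con0 P0 name ts) <->
  forall f a b, List.In (AppS f a) ts -> List.In (AppS f b) ts ->
  map (eval M e) a = map (eval M e) b -> iC M (name (AppS f a)) = iC M (name (AppS f b)).
Proof.
rewrite holds_foldr_and; split=> [hC f a b fa fb ab|hC phi].
- have sz : size a = size b by rewrite -(size_map (eval M e) a) ab size_map.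
  have pair_in : List.In (con_pair P0 name (AppS f a) (AppS f b))
      [seq con_pair P0 name p.1 p.2 | p <- [seq (t1, t2) | t1 <- ts, t2 <- ts]].
    by apply/List.in_map_iff; exists (AppS f a, AppS f b); rewrite In_allpairs.
  by move: (hC _ pair_in); rewrite /= eqxx sz eqxx /=; apply; apply/holds_zip_eq.
- move=> /List.in_map_iff [[t1 t2] [<- /In_allpairs [t1in t2in]]].
  case: t1 t1in => [n|c|g a|g a] ga; case: t2 t2in => [n'|c'|f b|f b] fb //=.
  by case: ifP => //= /andP[/eqP gf /eqP sz] /(holds_zip_eq _ sz); subst g; apply: hC.
Qed.

Lemma eval_purify M h g e t : {in consts_t t, g =1 iC M} ->
  (forall u, List.In u (ext_t t) -> g (name u) = eval M e u) ->
  eval (reinterp M h g) e (purify_t name t) = eval M e t.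
Proof.
elim/term_ind_In: t => //= [c|f ts IH|f ts IH] gM gname.
- by apply: gM; rewrite inE.
- congr (_ f _); rewrite -map_comp; apply: List.map_ext_in => t tin; apply: IH => // [c ct|u ut].
  + by apply: gM; apply/flatten_mapP_In; exists t.
  + by apply: gname; apply/In_flatten_map; exists t.
- by apply: (gname (AppS f ts)); left.
Qed.

Lemma holds_purify M h g e phi : qf phi -> {in consts_f phi, g =1 iC M} ->
  (forall u, List.In u (ext_f phi) -> g (name u) = eval M e u) ->
  holds (reinterp M h g) e (purify_f name phi) <-> holds M e phi.
Proof.
move=> qphi gM gname; rewrite purify_map_form -[X in _ <-> holds _ _ X]map_form_id.
symmetry; apply: map_form_holds => // t tin; symmetry; apply: eval_purify => [c ct|u ut].
- by apply: gM; rewrite consts_f_terms; apply/flatten_mapP_In; exists t.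
- by apply: gname; rewrite ext_f_terms In_flatten_map; exists t.
Qed.

End PurificationSemantics.

Lemma model_reinterp ar0 arP arS T0 M h g : Pi0_theory ar0 arP arS T0 ->
  model T0 M -> model T0 (reinterp M h g).
Proof.
move=> T0Pi0 MT0 phi T0phi e; have [_ sym0 consts0 _] := T0Pi0 phi T0phi.
by apply/holds_reinterp; [rewrite consts0 | rewrite sym0 | apply: MT0].
Qed.

End Semantics.
Arguments reinterp {F0 P0 S} M h g.

(* Classical: the keys range over types without decidable equality. *)
Lemma partial_fun_extension (I A B : Type) (P : I -> Prop) (key : I -> A) (val : I -> B)
    (base : A -> B) :
  (forall i j, P i -> P j -> key i = key j -> val i = val j) ->
  exists h : A -> B, (forall i, P i -> h (key i) = val i) /\
                     (forall a, (forall i, P i -> key i <> a) -> h a = base a).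
Proof.
move=> consistent.
pose h a := match ClassicalEpsilon.excluded_middle_informative (exists i, P i /\ key i = a) with
  | left ex => val (proj1_sig (ClassicalEpsilon.constructive_indefinite_description _ ex))
  | right _ => base a end.
exists h; split=> [i Pi|a nokey]; rewrite /h;
  case: ClassicalEpsilon.excluded_middle_informative => [ex|nex] //.
- by case: ClassicalEpsilon.constructive_indefinite_description => j [Pj kj] /=; apply: consistent.
- by case: nex; exists i.
- by case: ex => i [Pi ki]; case: (nokey i Pi ki).
Qed.

Section Algorithm.
Variables (F0 P0 : Type) (S : eqType) (ar0 : F0 -> nat) (arP : P0 -> nat) (arS : S -> nat).
Variables (is_s : S -> bool) (T0 : form F0 P0 S -> Prop) (G : seq (clause F0 P0 S)) (Cs : seq nat).
Variable name : term F0 S -> nat.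
Hypotheses (T0_Pi0 : Pi0_theory ar0 arP arS T0)
  (G_ground_flat : forall C, List.In C G -> ground_clause ar0 arP arS C && flat_clause C)
  (Cs_G : {subset Cs <= consts_G G})
  (name_inj : forall t1 t2, List.In t1 (est G) -> List.In t2 (est G) ->
     name t1 = name t2 -> t1 = t2)
  (name_fresh : forall t, List.In t (est G) -> name t \notin consts_G G).

Notation term := (term F0 S).
Notation form := (form F0 P0 S).
Notation consts_t := (@consts_t F0 S).
Notation vars_t := (@vars_t F0 S).
Notation symS_t := (@symS_t F0 S).
Notation eval M := (@eval F0 P0 S M).
Notation holds M := (@holds F0 P0 S M).
Notation iS M := (@iS F0 P0 S M).
Notation phiG := (clauses_form G).
Notation Csbar := (Cbar is_s Cs G).
Notation estS := (estS is_s G).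

Lemma clauses_form_props :
  [/\ qf phiG, fv_f phiG = [::], flat_f phiG & form_wf ar0 arP arS phiG].
Proof.
rewrite /clauses_form; elim: G G_ground_flat => [|C G' IH] CG //=.
have /andP[groundC flatC] := CG C (or_introl erefl).
have [-> -> -> ->] := IH (fun C' C'G' => CG C' (or_intror C'G')).
rewrite !andbT cats0; rewrite /clause_form.
elim: C groundC flatC {CG IH} => [|l C IHC] //= /andP[gl gC] /andP[fl fC].
have [-> -> -> ->] := IHC gC fC; move: gl => /andP[/andP[_ /andP[ql /eqP vl]] wl].
by rewrite /lit_form; case: l.1; rewrite /= ?ql ?vl ?fl ?wl.
Qed.

Lemma ext_clauses_form : ext_f phiG = est G.
Proof.
rewrite /clauses_form /est; elim: G => //= C G' ->; congr (_ ++ _).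
by rewrite /clause_form /ext_clause; elim: C => //= l C ->; rewrite /lit_form; case: l.1.
Qed.

Lemma est_subterm u : List.In u (est G) ->
  exists2 t, List.In t (form_terms phiG) & List.In u (ext_t t).
Proof. by rewrite -ext_clauses_form ext_f_terms In_flatten_map. Qed.

Lemma est_shape u : List.In u (est G) ->
  exists f a, u = AppS f a /\ all (@is_cst F0 S) a.
Proof.
case/est_subterm => t tin; apply: ext_t_flat.
by have [_ _ + _] := clauses_form_props; rewrite flat_f_terms => /all_InP; apply.
Qed.

Lemma est_vars u : List.In u (est G) -> vars_t u = [::].
Proof.
case/est_shape => f [a [-> cst_a]] /=.
by elim: a cst_a => //= -[] // c a IH /andP[_ /IH].
Qed.

Lemma est_consts u : List.In u (est G) -> {subset consts_t u <= consts_G G}.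
Proof.
case/est_subterm => t tin ut c cu.
have ct : c \in consts_t t by apply: (ext_t_sub (k := consts_t) _ _ ut) => // f ts x.
by rewrite /consts_G consts_f_terms; apply/flatten_mapP_In; exists t.
Qed.

Lemma est_symS u : List.In u (est G) -> {subset symS_t u <= symS_G G}.
Proof.
case/est_subterm => t tin ut f fu.
have ft : f \in symS_t t.
  by apply: (ext_t_sub (k := symS_t) _ _ ut) => // g ts x xts; rewrite inE xts orbT.
by rewrite /symS_G symS_f_terms; apply/flatten_mapP_In; exists t.
Qed.

Lemma est_wf u : List.In u (est G) -> term_wf ar0 arS u.
Proof.
case/est_subterm => t tin /ext_t_wf; apply.
by have [_ _ _ /form_wf_terms/all_InP] := clauses_form_props; apply.
Qed.

Lemma In_estS u : List.In u estS <-> List.In u (est G) /\ is_s_term is_s u.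
Proof. exact: List.filter_In. Qed.

Lemma estS_consts u : List.In u estS -> {subset consts_t u <= Csbar}.
Proof.
by move=> uS c cu; rewrite /Cbar mem_cat /argsS; apply/orP; right; apply/flatten_mapP_In; exists u.
Qed.

Lemma Csbar_consts_G : {subset Csbar <= consts_G G}.
Proof.
move=> c; rewrite /Cbar mem_cat => /orP[/Cs_G //|/flatten_mapP_In [u /In_estS [uG _]]].
exact: est_consts.
Qed.

Lemma name_neq_consts_G u c : List.In u (est G) -> c \in consts_G G -> name u <> c.
Proof. by move=> uG cG nuc; move: (name_fresh uG); rewrite nuc cG. Qed.

Lemma name_inj_estS u1 u2 : List.In u1 estS -> List.In u2 estS -> name u1 = name u2 -> u1 = u2.
Proof. by move=> /In_estS [u1G _] /In_estS [u2G _]; apply: name_inj. Qed.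

Lemma G1_ground : ground (G1 name G).
Proof.
have [qG fvG _ _] := clauses_form_props.
have nofv x : x \notin fv_f (G1 name G).
  rewrite /= mem_cat purify_map_form negb_or; apply/andP; split; apply/negP.
  - case/(mem_fv_map_form qG) => t tin /vars_purify xt.
    suff : x \in fv_f phiG by rewrite fvG.
    by rewrite fv_f_terms //; apply/flatten_mapP_In; exists t.
  - by case/mem_fv_Con0 => f [a [faG]]; rewrite est_vars.
rewrite /ground /= purify_map_form qf_map_form qG qf_Con0 /=.
by apply/eqP/nil_of_notin; rewrite -purify_map_form.
Qed.

Lemma map_eval_est_args M h g e f a : List.In (AppS f a) (est G) ->
  {in consts_t (AppS f a), g =1 iC M} -> map (eval (reinterp M h g) e) a = map (eval M e) a.
Proof.
move=> faG gM; apply: List.map_ext_in => t ta; apply: eval_reinterp => [c ct|f' /=].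
- by apply: gM; apply/flatten_mapP_In; exists t.
- have [f'' [a' [[_ <-] cst_a]]] := est_shape faG.
  by move/all_InP: cst_a => /(_ t ta); case: t ta.
Qed.

Lemma holds_G1_expand M e g : {in Csbar, g =1 iC M} ->
  (forall u, List.In u estS -> g (name u) = eval M e u) ->
  holds (reinterp M (iS M) g) e (G1 name G) ->
  exists h g', [/\ holds (reinterp M h g') e phiG,
    forall c, (c \in consts_G G -> c \in Csbar) -> g' c = iC M c &
    forall f, is_s f || (f \notin symS_G G) -> h f = iS M f].
Proof.
move=> gCs gname [Gpur GCon]; pose N := reinterp M (iS M) g.
pose P (fa : S * seq term) := List.In (AppS fa.1 fa.2) (est G) /\ ~~ is_s fa.1.
have consistent (fa fb : S * seq term) : P fa -> P fb ->
    (fa.1, map (eval N e) fa.2) = (fb.1, map (eval N e) fb.2) ->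
    g (name (AppS fa.1 fa.2)) = g (name (AppS fb.1 fb.2)).
  case: fa fb => [f a] [f' b] [faG _] [fbG _] /= [ff' ab]; subst f'.
  by move/holds_Con0: GCon; apply.
have [h [h_est h_base]] := partial_fun_extension (fun fvs => iS M fvs.1 fvs.2) consistent.
have h_iS f vs : is_s f || (f \notin symS_G G) -> h (f, vs) = iS M f vs.
  move=> fS; apply: h_base => -[f' a] [faG nf'] [ff' _]; subst f'.
  by move: fS; rewrite (negbTE nf') (est_symS faG) // inE eqxx.
pose g' c := if c \in consts_G G then g c else iC M c.
exists (fun f vs => h (f, vs)), g'; split=> [|c|f fS]; last first.
- by apply: FunctionalExtensionality.functional_extensionality => vs; apply: h_iS.
- by rewrite /g'; case: ifP => // cG /(_ isT); apply: gCs.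
pose M' := reinterp M (fun f vs => h (f, vs)) g'.
have [qG _ _ _] := clauses_form_props.
have g_g' : {in consts_f phiG, g =1 iC M'} by move=> c cG; rewrite /= /g' cG.
suff g_name : forall u, List.In u (ext_f phiG) -> g (name u) = eval M' e u.
  exact/(holds_purify (M := M') (iS M) qG g_g' g_name).
move=> u; rewrite ext_clauses_form => uG; have [f [a [Eu _]]] := est_shape uG; subst u.
have args_M'N : map (eval M' e) a = map (eval N e) a.
  by apply: (map_eval_est_args (M := N) _ uG) => c /(est_consts uG) cG; rewrite /= /g' cG.
rewrite /= args_M'N; case fS: (is_s f).
- have faS : List.In (AppS f a) estS by apply/In_estS.
  rewrite h_iS ?fS // gname //= (map_eval_est_args _ uG) // => c /(estS_consts faS).
  exact: gCs.
- by symmetry; apply: (h_est (f, a)); rewrite /P fS.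
Qed.

Section Step4.
Variable Gamma1 : form.
Hypotheses (Gamma1_qf : qf Gamma1) (Gamma1_wf : form_wf ar0 arP arS Gamma1)
  (Gamma1_symS : symS_f Gamma1 = [::])
  (Gamma1_consts : {subset consts_f Gamma1 <= consts_f (step2 is_s name Cs G)})
  (Gamma1_fv : fv_f Gamma1 = [::])
  (Gamma1_equiv : forall M, model T0 M -> forall e : nat -> dom M,
     holds M e (step2 is_s name Cs G) <-> holds M e Gamma1).

Notation Gamma := (step4 is_s name G Gamma1).
Notation unname c := (unname_t name estS (Cst _ _ c)).

Lemma holds_step4 M : model T0 M -> forall e, holds M e Gamma <->
  exists g, [/\ {in Csbar, g =1 iC M}, forall u, List.In u estS -> g (name u) = eval M e u
              & holds (reinterp M (iS M) g) e (G1 name G)].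
Proof.
move=> MT0 e; set sigma := fun c => eval M e (unname c).
have sigma_Csbar : {in Csbar, sigma =1 iC M}.
  move=> c /Csbar_consts_G cG; rewrite /sigma unname_fresh // => u /In_estS [uG _].
  exact: name_neq_consts_G.
have sigma_name u : List.In u estS -> sigma (name u) = eval M e u.
  by move=> uS; rewrite /sigma unname_name //; apply: name_inj_estS.
have [qG1 /eqP fvG1] := andP G1_ground.
have MsT0 := model_reinterp (h := iS M) (g := sigma) T0_Pi0 MT0.
rewrite /step4 unname_f_csubst holds_csubst // -(Gamma1_equiv MsT0) holds_exclose //.
split=> -[g gP]; exists g.
- case: gP => gkeep G1g; split=> // [c cCs|u uS].
  + have ckeep : c \in kept is_s name Cs G by rewrite /kept mem_cat cCs.
    by rewrite gkeep //; apply: sigma_Csbar.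
  + have ukeep : name u \in kept is_s name Cs G.
      by rewrite /kept mem_cat; apply/orP; right; apply/mapP_In; exists u.
    by rewrite gkeep //; apply: sigma_name.
- case: gP => gCs gname G1g; split=> // c; rewrite /kept mem_cat.
  case/orP=> [cCs|/mapP_In [u uS ->]]; first by rewrite gCs //; symmetry; apply: sigma_Csbar.
  by rewrite gname //; symmetry; apply: sigma_name.
Qed.

Lemma step4_entailed : entailsT T0 phiG Gamma.
Proof.
move=> M MT0 e MG; apply/(holds_step4 MT0).
pose g c := eval M e (unname_t name (est G) (Cst _ _ c)).
have g_G : {in consts_G G, g =1 iC M}.
  by move=> c cG; rewrite /g unname_fresh // => u uG; apply: name_neq_consts_G.
have g_name u : List.In u (est G) -> g (name u) = eval M e u.
  by move=> uG; rewrite /g unname_name.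
exists g; split=> [c /Csbar_consts_G|u /In_estS [uG _]|]; [exact: g_G | exact: g_name | split].
- have [qG _ _ _] := clauses_form_props.
  by apply/holds_purify => // u; rewrite ext_clauses_form; apply: g_name.
- have eval_args f a : List.In (AppS f a) (est G) ->
      map (eval (reinterp M (iS M) g) e) a = map (eval M e) a.
    by move=> faG; apply: (map_eval_est_args _ faG) => c /(est_consts faG); apply: g_G.
  apply/holds_Con0 => f a b fa fb; rewrite /= !g_name //=.
  by rewrite (eval_args f a fa) (eval_args f b fb) => ->.
Qed.

Lemma step4_uniform theta :
  (forall f, f \in symS_f theta -> f \in symS_f phiG -> is_s f) ->
  (forall c, c \in consts_f theta -> c \in consts_f phiG -> c \in Csbar) ->
  entailsT T0 phiG theta -> entailsT T0 Gamma theta.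
Proof.
move=> theta_symS theta_consts G_theta M MT0 e /(holds_step4 MT0) [g [gCs gname G1g]].
have [h [g' [M'G g'M hM]]] := holds_G1_expand gCs gname G1g.
have /holds_reinterp := G_theta _ (model_reinterp T0_Pi0 MT0) e M'G; apply=> [c cth|f fth].
- by apply: g'M => cG; apply: theta_consts.
- by apply: hM; case fG: (f \in symS_G G); rewrite ?orbT // theta_symS.
Qed.

Lemma unname_kept_consts d : d \in kept is_s name Cs G -> {subset consts_t (unname d) <= Csbar}.
Proof.
rewrite /kept mem_cat => /orP[dCs|/mapP_In [u uS ->]].
- rewrite unname_fresh => [c|u /In_estS [uG _]]; first by rewrite inE => /eqP ->.
  exact: name_neq_consts_G uG (Csbar_consts_G dCs).
- by rewrite unname_name //; [apply: estS_consts | apply: name_inj_estS].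
Qed.

Lemma step4_consts : {subset consts_f Gamma <= Csbar}.
Proof.
move=> c; rewrite /step4 unname_f_csubst => /mem_consts_map_form [t tin /mem_consts_csubst [d dt]].
apply: unname_kept_consts; apply: (consts_exclose (phi := G1 name G)); apply: Gamma1_consts.
by rewrite consts_f_terms; apply/flatten_mapP_In; exists t.
Qed.

Lemma step4_symS : all is_s (symS_f Gamma).
Proof.
apply/allP => f; rewrite /step4 unname_f_csubst.
case/mem_symS_map_form => t tin /mem_symS_csubst [ft|[d _]].
  suff : f \in symS_f Gamma1 by rewrite Gamma1_symS.
  by rewrite symS_f_terms; apply/flatten_mapP_In; exists t.
case: (unname_cst_cases name estS d) => [-> //|[u /In_estS [uG gS] ->]].
have [g [a [Eu cst_a]]] := est_shape uG; subst u.
rewrite /= inE => /orP[/eqP -> //|/flatten_mapP_In [t' t'a]].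
by move/all_InP: cst_a => /(_ t' t'a); case: t' t'a.
Qed.

Lemma step4_ground : ground Gamma && form_wf ar0 arP arS Gamma.
Proof.
have unname_ground d : vars_t (unname d) = [::] /\ term_wf ar0 arS (unname d).
  case: (unname_cst_cases name estS d) => [-> //|[u /In_estS [uG _] ->]].
  by rewrite est_vars // est_wf.
rewrite /ground /step4 unname_f_csubst qf_map_form Gamma1_qf /=; apply/andP; split.
- apply/eqP/nil_of_notin => x; apply/negP.
  case/(mem_fv_map_form Gamma1_qf) => t tin /mem_vars_csubst [xt|[d _]]; last first.
    by have [-> _] := unname_ground d.
  suff : x \in fv_f Gamma1 by rewrite Gamma1_fv.
  by rewrite fv_f_terms //; apply/flatten_mapP_In; exists t.
- apply: form_wf_map_form => // t tin; apply: term_wf_csubst => [d|].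
    by have [_ ->] := unname_ground d.
  by move/form_wf_terms/all_InP: Gamma1_wf; apply.
Qed.

Lemma step4_gen_unif_interp : gen_unif_interp ar0 arP arS is_s T0 Csbar phiG Gamma.
Proof.
split; [exact: step4_ground | exact: step4_symS | exact: step4_consts | exact: step4_entailed |].
by move=> theta _ _; apply: step4_uniform.
Qed.

End Step4.

End Algorithm.

Theorem mainTheorem3
  (F0 P0 : Type) (S : eqType)
  (ar0 : F0 -> nat) (arP : P0 -> nat) (arS : S -> nat)
  (is_s : S -> bool)
  (T0 : form F0 P0 S -> Prop)
  (HT0 : Pi0_theory ar0 arP arS T0)
  (HQE : allows_QE ar0 arP arS T0)
  (G : seq (clause F0 P0 S))
  (HG : forall C, List.In C G -> [/\ ground_clause ar0 arP arS C, flat_clause C & linear_clause C])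
  (Cs : seq nat)
  (HCs : {subset Cs <= consts_G G})
  (name : term F0 S -> nat)
  (Hname_inj : forall t1 t2, List.In t1 (est G) -> List.In t2 (est G) ->
                 name t1 = name t2 -> t1 = t2)
  (Hname_fresh : forall t, List.In t (est G) -> name t \notin consts_G G)
  (Gamma1 : form F0 P0 S)
  (HGamma1 : [/\ qf Gamma1 && form_wf ar0 arP arS Gamma1, symS_f Gamma1 = [::],
                 {subset consts_f Gamma1 <= consts_f (step2 is_s name Cs G)},
                 fv_f Gamma1 = [::] &
                 forall M, model T0 M -> forall e : nat -> dom M,
                   holds e (step2 is_s name Cs G) <-> holds e Gamma1]) :
  gen_unif_interp ar0 arP arS is_s T0 (Cbar is_s Cs G) (clauses_form G)
    (step4 is_s name G Gamma1).
Proof.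
(* HQE only guarantees that Gamma1 exists. *)
have G_ground_flat C : List.In C G -> ground_clause ar0 arP arS C && flat_clause C.
  by case/HG => -> ->.
case: HGamma1 => /andP[Gamma1_qf Gamma1_wf] Gamma1_symS Gamma1_consts Gamma1_fv Gamma1_equiv.
exact: step4_gen_unif_interp.
Qed.
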